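(* Let $\Omega$ be a finite state space with at least three states and $X:\Omega\to\mathbb R$ a non-constant security. Then $X$ is separable under every information structure $\Pi\in\mathcal P$ on $\Omega$ (with any number of traders) if and only if either (a) $X$ is an Arrow–Debreu security: there is a state $\omega$ and values $a\neq b$ with $X(\omega)=a$ and $X(\omega')=b$ for all $\omega'\neq\omega$; or (b) there are values $a<b<d$ and two distinct states $\omega_a,\omega_d$ with $X(\omega_a)=a$, $X(\omega_d)=d$ and $X(\omega)=b$ for all $\omega\neq\omega_a,\omega_d$.
   Context: An information structure $\Pi=(\Pi_1,\dots,\Pi_n)$ assigns to each trader $i\in\{1,\dots,n\}$ a partition $\Pi_i$ of $\Omega$; $\Pi_i(\omega)$ is the cell containing $\omega$. $\mathcal P$ is the collection of information structures on state spaces with at least three states such that $\bigcap_i\Pi_i(\omega)=\{\omega\}$ for all $\omega$. $X$ is non-separable under $\Pi$ if there exist a probability distribution $\mu$ on $\Omega$ and $v\in\mathbb R$ such that (i) $X(\omega)\neq v$ for some $\omega\in\operatorname{Supp}(\mu)$, and (ii) $E_\mu[X\mid\Pi_i(\omega)]=v$ for all $i$ and all $\omega\in\operatorname{Supp}(\mu)$; otherwise $X$ is separable under $\Pi$. *)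

From mathcomp Require Import all_boot all_order all_algebra.
From mathcomp Require Import reals.
Set Implicit Arguments. Unset Strict Implicit. Unset Printing Implicit Defensive.
Import Order.TTheory GRing.Theory Num.Theory.
Local Open Scope ring_scope.

Section Defs.
Variables (R : realType) (Omega : finType).

(* Membership in the class P
   additionally requires that the cells containing w intersect to {w}. *)
Definition info_structure (n : nat) (Pi : 'I_n -> {set {set Omega}}) : Prop :=
  (forall i, partition (Pi i) [set: Omega]) /\
  (forall w, \bigcap_(i < n) pblock (Pi i) w = [set w]).

Definition is_distribution (mu : Omega -> R) : Prop :=
  (forall w, 0 <= mu w) /\ \sum_(w : Omega) mu w = 1.

Definition cond_exp (mu : Omega -> R) (X : Omega -> R) (C : {set Omega}) : R :=
  (\sum_(w in C) mu w * X w) / (\sum_(w in C) mu w).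

Definition non_separable (n : nat) (Pi : 'I_n -> {set {set Omega}})
  (X : Omega -> R) : Prop :=
  exists (mu : Omega -> R) (v : R),
    is_distribution mu /\
    (exists w, 0 < mu w /\ X w <> v) /\
    (forall i w, 0 < mu w -> cond_exp mu X (pblock (Pi i) w) = v).

Definition separable (n : nat) (Pi : 'I_n -> {set {set Omega}})
  (X : Omega -> R) : Prop := ~ non_separable Pi X.

Definition arrow_debreu (X : Omega -> R) : Prop :=
  exists (w : Omega) (a b : R), a <> b /\ X w = a /\
    forall w', w' <> w -> X w' = b.

Definition two_extreme (X : Omega -> R) : Prop :=
  exists (a b d : R) (wa wd : Omega),
    a < b /\ b < d /\ wa <> wd /\ X wa = a /\ X wd = d /\
    forall w, w <> wa -> w <> wd -> X w = b.

End Defs.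

From mathcomp Require Import all_boot all_order all_algebra.
From mathcomp Require Import reals.
Import Order.TTheory GRing.Theory Num.Theory.
Local Open Scope ring_scope.

(* If the traders agree on a price v for X while X is not almost surely v, then
   every cell of a supported state above v carries mass below v, and vice
   versa.  The cells of a state meet only in that state, so for any state b
   below v some cell of a supported state above v avoids b and yet contains a
   supported state below v: there are two states strictly above v and two
   strictly below.  Arrow-Debreu and two-extreme securities admit no such v.
   Conversely, given p1, p2 above v and q1, q2 below, two traders pairing them
   as {p1,q1}, {p2,q2} and as {p1,q2}, {p2,q1} jointly know the state, and the
   prior proportional to 1/|X - v| on these four states prices every pair at v.
   Any other non-constant X has two states off its argmin and argmax with
   different values, and their midpoint is such a v. *)

Set Implicit Arguments. Unset Strict Implicit. Unset Printing Implicit Defensive.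

Lemma exists_neq_of_two (T : eqType) (P : T -> Prop) (x y z : T) :
  x != y -> P x -> P y -> exists2 t, t != z & P t.
Proof.
move=> xy Px Py; have [xz|] := eqVneq x z; last by exists x.
by exists y => //; rewrite -xz eq_sym.
Qed.

Lemma mem_pblock_preim (T : finType) (rT : eqType) (f : T -> rT) x y :
  (y \in pblock (preim_partition f [set: T]) x) = (f x == f y).
Proof. by apply: pblock_equivalence_partition; rewrite ?inE //; split=> // /eqP->. Qed.

Section CondExp.
Variables (R : realType) (Omega : finType).
Implicit Types (mu X : Omega -> R) (C : {set Omega}) (v : R).

Lemma cond_expN mu X C : cond_exp mu (fun x => - X x) C = - cond_exp mu X C.
Proof.
rewrite /cond_exp -mulNr -sumrN; congr (_ / _).
by apply: eq_bigr => x _; rewrite mulrN.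
Qed.

Lemma cond_exp_eq mu X C v : \sum_(x in C) mu x != 0 ->
  cond_exp mu X C = v <-> \sum_(x in C) mu x * (X x - v) = 0.
Proof.
move=> mass; rewrite /cond_exp.
have -> : \sum_(x in C) mu x * (X x - v)
          = \sum_(x in C) mu x * X x - v * \sum_(x in C) mu x.
  rewrite mulr_sumr -sumrB.
  by apply: eq_bigr => x _; rewrite mulrBr [v * _]mulrC.
split=> [<-|/eqP]; first by rewrite divfK // subrr.
by rewrite subr_eq0 => /eqP->; rewrite mulfK.
Qed.

Lemma cond_exp_below mu X C v w : (forall x, 0 <= mu x) ->
  w \in C -> 0 < mu w -> cond_exp mu X C = v -> v < X w ->
  exists2 q, q \in C & (0 < mu q) && (X q < v).
Proof.
move=> mu_ge0 wC muw Ev vw.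
have [q /andP[qC supp_q]|none] :=
  pickP (fun q => (q \in C) && ((0 < mu q) && (X q < v))); first by exists q.
have mass : 0 < \sum_(x in C) mu x by rewrite (bigD1 w) //= ltr_pwDl ?sumr_ge0.
have dev_ge0 x : x \in C -> 0 <= mu x * (X x - v).
  move=> xC; move: (none x); rewrite xC /= => /negbT.
  rewrite negb_and -!leNgt => /orP[mux|vx]; last by rewrite mulr_ge0 ?subr_ge0.
  by rewrite (@le_anti _ _ (mu x) 0) ?mux ?mu_ge0 ?mul0r.
have /eqP := psumr_eq0P dev_ge0 ((cond_exp_eq _ _ (lt0r_neq0 mass)).1 Ev) wC.
by rewrite mulf_eq0 subr_eq0 !gt_eqF.
Qed.

Lemma cond_exp_above mu X C v w : (forall x, 0 <= mu x) ->
  w \in C -> 0 < mu w -> cond_exp mu X C = v -> X w < v ->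
  exists2 q, q \in C & (0 < mu q) && (v < X q).
Proof.
move=> mu_ge0 wC muw Ev wv.
have EvN : cond_exp mu (fun x => - X x) C = - v by rewrite cond_expN Ev.
have [|q qC] := cond_exp_below mu_ge0 wC muw EvN; first by rewrite ltrN2.
by rewrite ltrN2; exists q.
Qed.

End CondExp.

Section InfoStructure.
Variables (R : realType) (Omega : finType) (n : nat).
Variable Pi : 'I_n -> {set {set Omega}}.
Hypothesis info : info_structure Pi.

Lemma mem_pblock_self i w : w \in pblock (Pi i) w.
Proof. by rewrite mem_pblock (cover_partition (info.1 i)) inE. Qed.

Lemma separating_cell a w : a != w -> exists i, a \notin pblock (Pi i) w.
Proof.
move=> aw; have [i ai|all_in] := pickP (fun i => a \notin pblock (Pi i) w).
  by exists i.
have : a \in \bigcap_(i < n) pblock (Pi i) w.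
  by apply/bigcapP => i _; move/negbFE: (all_in i).
by rewrite info.2 inE (negPf aw).
Qed.

Lemma info_structure_arity_gt0 : (1 < #|Omega|)%N -> (0 < n)%N.
Proof.
case: n Pi info => // Pi0 [_ cap] card2.
have /card_gt0P[w _] : (0 < #|Omega|)%N by apply: ltnW.
by move: card2 (cap w); rewrite big_ord0 -cardsT => /[swap] ->; rewrite cards1.
Qed.

Section Equilibrium.
Variables (mu X : Omega -> R) (v : R).
Hypothesis mu_ge0 : forall x, 0 <= mu x.
Hypothesis priced_at_v : forall i w, 0 < mu w -> cond_exp mu X (pblock (Pi i) w) = v.

Lemma other_below a b : 0 < mu a -> v < X a -> X b < v ->
  exists2 q, q != b & X q < v.
Proof.
move=> mua va bv.
have [i bi] : exists i, b \notin pblock (Pi i) a.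
  by apply: separating_cell; apply: contraTneq bv => ->; rewrite -leNgt ltW.
have [q qi /andP[_ qv]] :=
  cond_exp_below mu_ge0 (mem_pblock_self i a) mua (priced_at_v i mua) va.
by exists q => //; apply: contraNneq bi => <-.
Qed.

Lemma other_above b a : 0 < mu b -> X b < v -> v < X a ->
  exists2 p, p != a & v < X p.
Proof.
move=> mub bv va.
have [i ai] : exists i, a \notin pblock (Pi i) b.
  by apply: separating_cell; apply: contraTneq va => ->; rewrite -leNgt ltW.
have [p pi /andP[_ vp]] :=
  cond_exp_above mu_ge0 (mem_pblock_self i b) mub (priced_at_v i mub) bv.
by exists p => //; apply: contraNneq ai => <-.
Qed.

End Equilibrium.
End InfoStructure.

Ltac decide_var_eqs :=
  repeat (rewrite /=; match goal with
  | |- context[?x == ?y] => is_var x; is_var y; case: (eqVneq x y) => [?|?]; try subst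
  end);
  try match goal with H : is_true (?x != ?x) |- _ => by have := H; rewrite eqxx end;
  try done.

Section CrossedPairs.
Variables (R : realType) (Omega : finType) (X : Omega -> R) (v : R).
Variables (p1 p2 q1 q2 : Omega).
Hypotheses (p12 : p1 != p2) (q12 : q1 != q2).
Hypotheses (vp1 : v < X p1) (vp2 : v < X p2) (q1v : X q1 < v) (q2v : X q2 < v).

Lemma above_below_neq : [/\ p1 != q1, p1 != q2, p2 != q1 & p2 != q2].
Proof.
have neq p q : v < X p -> X q < v -> p != q.
  by move=> vp qv; apply: contraTneq vp => ->; rewrite -leNgt ltW.
by split; apply: neq.
Qed.

(* The fibres of [pair_with a b] are [{a, q1}], [{b, q2}] and singletons. *)
Definition pair_with (a b x : Omega) : Omega :=
  if x == q1 then a else if x == q2 then b else x.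

Definition crossed_pairs (i : 'I_2) : {set {set Omega}} :=
  preim_partition (if i == 0 :> nat then pair_with p1 p2 else pair_with p2 p1)
    [set: Omega].

Lemma crossed_pairs_info_structure : info_structure crossed_pairs.
Proof.
have [? ? ? ?] := above_below_neq.
split=> [i|w]; first exact: preim_partitionP.
apply/setP => y; rewrite inE; apply/bigcapP/eqP => [cells|-> i _].
  move: (cells ord0 isT) (cells ord_max isT); clear cells.
  by rewrite !mem_pblock_preim /pair_with; decide_var_eqs.
by rewrite /crossed_pairs mem_pblock_preim.
Qed.

Lemma crossed_pairs_cell i w : w \in [set p1; p2; q1; q2] ->
  exists p q, [/\ p \in [set p1; p2], q \in [set q1; q2]
                & pblock (crossed_pairs i) w = [set p; q]].
Proof.
have [? ? ? ?] := above_below_neq.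
rewrite !inE -!orbA; case: i => [[|[|//]] /= ?] /or4P[]/eqP->;
  [exists p1, q1 | exists p2, q2 | exists p1, q1 | exists p2, q2
  |exists p1, q2 | exists p2, q1 | exists p2, q1 | exists p1, q2];
  rewrite !inE !eqxx ?orbT; split=> //; apply/setP => y;
  rewrite mem_pblock_preim !inE /pair_with; decide_var_eqs.
Qed.

Definition traded : {set Omega} := [set p1; p2; q1; q2].

Definition weight x : R := if x \in traded then `|X x - v|^-1 else 0.

Definition balancing_prior x : R := weight x / \sum_y weight y.

Lemma traded_neq x : x \in traded -> X x != v.
Proof.
rewrite !inE -!orbA => /or4P[]/eqP->.
all: by rewrite ?(gt_eqF vp1) ?(gt_eqF vp2) ?(lt_eqF q1v) ?(lt_eqF q2v).
Qed.

Lemma weight_ge0 x : 0 <= weight x.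
Proof. by rewrite /weight; case: ifP; rewrite ?invr_ge0. Qed.

Lemma weight_gt0 x : x \in traded -> 0 < weight x.
Proof.
by move=> xt; rewrite /weight xt invr_gt0 normr_gt0 subr_eq0 traded_neq.
Qed.

Lemma total_weight_gt0 : 0 < \sum_y weight y.
Proof.
have p1t : p1 \in traded by rewrite !inE eqxx.
by rewrite (bigD1 p1) //= ltr_pwDl ?weight_gt0 ?sumr_ge0 // => y; rewrite weight_ge0.
Qed.

Lemma prior_deviation x : x \in traded ->
  balancing_prior x * (X x - v) = Num.sg (X x - v) / \sum_y weight y.
Proof.
move=> xt; rewrite /balancing_prior /weight xt mulrAC; congr (_ / _).
by rewrite {2}(numEsg (X x - v)) mulrCA mulVf ?mulr1 // normr_eq0 subr_eq0 traded_neq.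
Qed.

Lemma cond_exp_crossed_pair p q : p \in [set p1; p2] -> q \in [set q1; q2] ->
  cond_exp balancing_prior X [set p; q] = v.
Proof.
move=> pP qQ.
have vp : v < X p by move: pP; rewrite !inE => /orP[]/eqP->.
have qv : X q < v by move: qQ; rewrite !inE => /orP[]/eqP->.
have [pt qt] : p \in traded /\ q \in traded.
  by move: pP qQ; rewrite /traded !inE => /orP[]/eqP-> /orP[]/eqP->; rewrite !eqxx ?orbT.
have pq : p != q by apply: contraTneq vp => ->; rewrite -leNgt ltW.
apply/cond_exp_eq; rewrite big_setU1 ?big_set1 ?inE //=.
  by rewrite gt_eqF // addr_gt0 // divr_gt0 ?weight_gt0 ?total_weight_gt0.
rewrite !prior_deviation // gtr0_sg ?subr_gt0 // ltr0_sg ?subr_lt0 //.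
by rewrite mulNr subrr.
Qed.

Lemma crossed_pairs_non_separable : non_separable crossed_pairs X.
Proof.
have total_gt0 := total_weight_gt0.
exists balancing_prior, v; split; [split|split].
- by move=> x; rewrite divr_ge0 ?weight_ge0 ?ltW.
- by rewrite /balancing_prior -mulr_suml mulfV ?gt_eqF.
- exists p1; split; first by rewrite divr_gt0 ?weight_gt0 // !inE eqxx.
  by apply/eqP; rewrite gt_eqF.
move=> i w muw; have wt : w \in traded.
  by apply: contraTT muw; rewrite /balancing_prior /weight => /negPf->; rewrite mul0r ltxx.
by have [p [q [pP qQ ->]]] := crossed_pairs_cell i wt; apply: cond_exp_crossed_pair.
Qed.

End CrossedPairs.

Section TwoOnEachSide.
Variables (R : realType) (Omega : finType).
Implicit Types X : Omega -> R.

Definition two_on_each_side X : Prop := exists v : R,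
  (exists p1 p2, [/\ p1 != p2, v < X p1 & v < X p2]) /\
  (exists q1 q2, [/\ q1 != q2, X q1 < v & X q2 < v]).

Lemma two_on_each_side_of_non_separable n (Pi : 'I_n -> {set {set Omega}}) X :
  info_structure Pi -> (0 < n)%N -> non_separable Pi X -> two_on_each_side X.
Proof.
move=> info n_gt0 [mu [v [[mu_ge0 _] [[w [muw Xw]] priced_at_v]]]].
have cell_w := mem_pblock_self info (Ordinal n_gt0) w.
have [[a /andP[mua va]] [b /andP[mub bv]]] :
    (exists a, (0 < mu a) && (v < X a)) /\ (exists b, (0 < mu b) && (X b < v)).
  have Ev := priced_at_v (Ordinal n_gt0) w muw.
  case: (ltgtP (X w) v) => [wv|vw|//].
    have [a _ supp_a] := cond_exp_above mu_ge0 cell_w muw Ev wv.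
    by split; [exists a | exists w; rewrite muw wv].
  have [b _ supp_b] := cond_exp_below mu_ge0 cell_w muw Ev vw.
  by split; [exists w; rewrite muw vw | exists b].
have [q qb qv] := other_below info mu_ge0 priced_at_v mua va bv.
have [p pa vp] := other_above info mu_ge0 priced_at_v mub bv va.
by exists v; split; [exists a, p | exists b, q]; rewrite eq_sym.
Qed.

Lemma non_separable_of_two_on_each_side X : two_on_each_side X ->
  exists Pi : 'I_2 -> {set {set Omega}}, info_structure Pi /\ non_separable Pi X.
Proof.
move=> [v [[p1 [p2 [p12 vp1 vp2]]] [q1 [q2 [q12 q1v q2v]]]]].
exists (crossed_pairs p1 p2 q1 q2); split.
  exact: crossed_pairs_info_structure p12 vp1 vp2 q1v q2v.
exact: crossed_pairs_non_separable p12 q12 vp1 vp2 q1v q2v.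
Qed.

Lemma arrow_debreu_not_two_on_each_side X :
  arrow_debreu X -> ~ two_on_each_side X.
Proof.
move=> [w [a [b [_ [_ Xb]]]]] [v [[p1 [p2 [p12 vp1 vp2]]] [q1 [q2 [q12 q1v q2v]]]]].
have [p /eqP pw] := exists_neq_of_two (P := fun p => v < X p) w p12 vp1 vp2.
have [q /eqP qw] := exists_neq_of_two (P := fun q => X q < v) w q12 q1v q2v.
by rewrite /= (Xb p pw) (Xb q qw) => /lt_trans /[apply]; rewrite ltxx.
Qed.

Lemma two_extreme_not_two_on_each_side X :
  two_extreme X -> ~ two_on_each_side X.
Proof.
move=> [a [b [d [wa [wd [ab [bd [_ [Xa [Xd Xb]]]]]]]]]].
move=> [v [[p1 [p2 [p12 vp1 vp2]]] [q1 [q2 [q12 q1v q2v]]]]].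
have [p /eqP pd vp] := exists_neq_of_two (P := fun p => v < X p) wd p12 vp1 vp2.
have [q /eqP qa qv] := exists_neq_of_two (P := fun q => X q < v) wa q12 q1v q2v.
have Xp_le : X p <= b.
  by have [->|/eqP pa] := eqVneq p wa; rewrite ?Xa ?(ltW ab) ?(Xb p pa pd).
have Xq_ge : b <= X q.
  by have [->|/eqP qd] := eqVneq q wd; rewrite ?Xd ?(ltW bd) ?(Xb q qa qd).
by have := lt_trans (le_lt_trans Xq_ge qv) (lt_le_trans vp Xp_le); rewrite ltxx.
Qed.

Lemma two_on_each_side_of_lt X m y z M :
  m != y -> z != M -> X m <= X y -> X y < X z -> X z <= X M -> two_on_each_side X.
Proof.
move=> my zM my_le yz zM_le; have [y_lt lt_z] := midf_lt yz.
exists ((X y + X z) / 2); split; [exists z, M | exists m, y]; split=> //.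
- exact: lt_le_trans zM_le.
- exact: le_lt_trans y_lt.
Qed.

Lemma arrow_debreu_or_two_extreme_of_flat X m M c :
  X m < X M -> c != m -> c != M -> X m <= X c <= X M ->
  (forall x, x != m -> x != M -> X x = X c) -> arrow_debreu X \/ two_extreme X.
Proof.
move=> mM cm cM /andP[mc cM_le] flat.
have [Xmc|Xmc] := eqVneq (X m) (X c).
  left; exists M, (X M), (X c); split; first by apply/eqP; rewrite -Xmc gt_eqF.
  split=> // x /eqP xM; have [->//|xm] := eqVneq x m; exact: flat.
have [XMc|XMc] := eqVneq (X M) (X c).
  left; exists m, (X m), (X c); split; first exact/eqP.
  split=> // x /eqP xm; have [->//|xM] := eqVneq x M; exact: flat.
right; exists (X m), (X c), (X M), m, M.
split; first by rewrite lt_neqAle Xmc.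
split; first by rewrite lt_neqAle eq_sym XMc.
split; first by move=> mM_eq; move: mM; rewrite mM_eq ltxx.
by do 2 split=> //; move=> x /eqP xm /eqP xM; apply: flat.
Qed.

Lemma arrow_debreu_or_two_extreme X :
  (2 < #|Omega|)%N -> (exists w1 w2, X w1 <> X w2) -> ~ two_on_each_side X ->
  arrow_debreu X \/ two_extreme X.
Proof.
move=> card3 [w1 [w2 X12]] not_two.
have [m _ m_min] := @arg_minP _ _ Omega w1 xpredT X isT.
have [M _ M_max] := @arg_maxP _ _ Omega w1 xpredT X isT.
have mM : X m < X M.
  rewrite lt_neqAle (le_trans (m_min w1 isT) (M_max w1 isT)) andbT.
  apply/eqP => mM_eq; apply: X12; apply/le_anti.
  have flat x y : X x <= X y by rewrite (le_trans (M_max x isT)) // -mM_eq m_min.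
  by rewrite !flat.
have [c] : exists c, c \in ~: [set m; M].
  apply/card_gt0P; rewrite -(ltn_add2l #|[set m; M]|) addn0 cardsC cards2.
  by apply: leq_ltn_trans card3; case: (m != M).
rewrite !inE negb_or => /andP[cm cM].
apply: (arrow_debreu_or_two_extreme_of_flat mM cm cM).
  by rewrite (m_min c isT); apply: M_max.
move=> x xm xM; case: (ltgtP (X x) (X c)) => [xc|cx|//]; exfalso; apply: not_two.
  by apply: (two_on_each_side_of_lt _ cM (m_min x isT) xc (M_max c isT)); rewrite eq_sym.
by apply: (two_on_each_side_of_lt _ xM (m_min c isT) cx (M_max x isT)); rewrite eq_sym.
Qed.

End TwoOnEachSide.

Theorem proposition3 (R : realType) (Omega : finType) (X : Omega -> R) :
  (2 < #|Omega|)%N ->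
  (exists w1 w2 : Omega, X w1 <> X w2) ->
  ((forall (n : nat) (Pi : 'I_n -> {set {set Omega}}),
      info_structure Pi -> separable Pi X)
   <-> (arrow_debreu X \/ two_extreme X)).
Proof.
move=> card3 nonconst; split=> [separable_all | shape n Pi info non_sep].
  apply: arrow_debreu_or_two_extreme card3 nonconst _ => two_sides.
  have [Pi [info non_sep]] := non_separable_of_two_on_each_side two_sides.
  exact: separable_all info non_sep.
have n_gt0 := info_structure_arity_gt0 info (ltnW card3).
have two_sides := two_on_each_side_of_non_separable info n_gt0 non_sep.
by case: shape => [/arrow_debreu_not_two_on_each_side | /two_extreme_not_two_on_each_side].
Qed.
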